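(* Let $p,q$ be positive integers with $p\ge 2q$. The graph $K_{p/q}$ admits an orientation without alternating odd cycles if and only if $p/q\le 3$.
   Context: The rational complete graph $K_{p/q}$ has vertex set $\{0,1,\dots,p-1\}$, with $a,b$ adjacent iff $q\le|a-b|\le p-q$. An orientation assigns each edge exactly one direction. In an oriented graph, a subgraph that is a cycle is called alternating if at most one of its vertices has both positive in-degree and positive out-degree within that cycle; an alternating odd cycle is an alternating cycle of odd length. *)

From mathcomp Require Import all_boot.
Unset Printing Implicit Defensive.

Definition ndist (a b : nat) : nat := (a - b) + (b - a).

Definition Kpq_adj (p q : nat) : rel 'I_p :=
  fun a b => (q <= ndist a b) && (ndist a b <= p - q).

Definition is_orientation (p q : nat) (o : rel 'I_p) : Prop :=
  (forall a b, o a b -> Kpq_adj p q a b) /\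
  (forall a b, Kpq_adj p q a b -> o a b != o b a).

Definition is_cycle (p q : nat) (s : seq 'I_p) : Prop :=
  [/\ uniq s, 3 <= size s & cycle (Kpq_adj p q) s].

(* vertex x of cycle s has both positive in-degree and out-degree within s *)
Definition mixed_in (p : nat) (o : rel 'I_p) (s : seq 'I_p) (x : 'I_p) : bool :=
  (o (prev s x) x && o x (next s x)) || (o (next s x) x && o x (prev s x)).

Definition alternating (p : nat) (o : rel 'I_p) (s : seq 'I_p) : Prop :=
  count (mixed_in p o s) s <= 1.

Definition alternating_odd_cycle (p q : nat) (o : rel 'I_p) (s : seq 'I_p) : Prop :=
  [/\ is_cycle p q s, odd (size s) & alternating p o s].

From mathcomp Require Import all_boot.
From mathcomp Require Import zify.

(* If p <= 3q, the blocks [0, q), [q, 2q), [2q, p) properly colour K_{p/q};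
   orient every edge from block i to block i + 1 (mod 3).  Along a cycle, a
   vertex that is not mixed then has both neighbours in the same block, so on an
   odd cycle with at most one mixed vertex the colouring would be 2-periodic,
   forcing two consecutive vertices into the same block.
   If p > 3q, every triangle must be a directed 3-cycle, since otherwise it is
   an alternating triangle.  Chasing the triangles {a, a+q, a+2q},
   {a, a+q, a+2q+1} and {a, a+q+1, a+2q+1} shows that all edges {a, a+q}
   (a <= q) and {a, a+q+1} (a < q) point the same way, up or down.  Adding q
   modulo 2q+1 then runs through the odd cycle 0, q, 2q, q-1, 2q-1, ..., q+1,
   whose only mixed vertex is q. *)

Set Implicit Arguments.
Unset Strict Implicit.

Lemma odd_step2_eq (U : Type) (g : nat -> U) m : odd m ->
  (forall i, i.+1 < m -> g i = g i.+2) -> g 1 = g m.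
Proof.
move=> odd_m g2.
have g_odd k : k.*2 < m -> g 1 = g k.*2.+1.
  elim: k => [//|k IHk] lt_k; rewrite IHk; last lia.
  by rewrite g2 -?doubleS //; lia.
have m_eq : m = (m./2).*2.+1 by rewrite -[LHS]odd_double_half odd_m.
by rewrite [in RHS]m_eq; apply: g_odd; rewrite [X in _ < X]m_eq.
Qed.

Lemma iter_next_cycle (T : eqType) (s : seq T) x : uniq s -> x \in s ->
  iter (size s) (next s) x = x /\
  forall i, 0 < i < size s -> iter i (next s) x != x.
Proof.
move=> Us /rot_to[k s' rot_s].
have Us' : uniq (x :: s') by rewrite -rot_s rot_uniq.
have size_s : size s = (size s').+1 by rewrite -(size_rot k) rot_s.
have : fcycle (next s) (x :: s').
  by rewrite -rot_s -(eq_fcycle (next_rot k Us)) cycle_next ?rot_uniq.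
move=> /= /fpathE; rewrite size_rcons -size_s => traj.
have iterE i : i <= size s -> iter i (next s) x = nth x (x :: rcons s' x) i.
  by move=> le_i; rewrite traj -trajectS nth_traject.
split; first by rewrite iterE // size_s /= nth_rcons ltnn eqxx.
move=> i /andP[i_gt0 lt_i]; rewrite iterE ?(ltnW lt_i) // -rcons_cons nth_rcons.
rewrite /= -size_s lt_i.
by rewrite -[X in _ != X]/(nth x (x :: s') 0) nth_uniq //= -?size_s // -lt0n.
Qed.

Lemma odd_cycle_eq_next (T : eqType) (U : Type) (f : T -> U) (s : seq T) x :
  uniq s -> odd (size s) -> x \in s ->
  {in s, forall y, y != x -> f (prev s y) = f (next s y)} ->
  f x = f (next s x).
Proof.
move=> Us odd_s xs f_prev_next.
have [iter_size iter_neq] := iter_next_cycle Us xs.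
have mem_iter i : iter i (next s) x \in s by elim: i => //= i IHi; rewrite mem_next.
have := @odd_step2_eq _ (fun i => f (iter i (next s) x)) _ odd_s.
rewrite /= iter_size => -> // i lt_i.
rewrite -[in LHS](prev_next Us (iter i _ x)) -iterS f_prev_next ?mem_iter //.
by rewrite iter_neq // (leq_ltn_trans _ lt_i).
Qed.

Lemma count_le1_exception (T : eqType) (P : pred T) (s : seq T) :
  uniq s -> 0 < size s -> count P s <= 1 ->
  exists2 x, x \in s & {in s, forall y, y != x -> ~~ P y}.
Proof.
move=> Us s_gt0; have [/hasP[x xs Px] | /hasPn noP] := boolP (has P s); last first.
  case: s s_gt0 noP {Us} => // x0 s _ noP.
  by exists x0 => [|y /noP //]; rewrite mem_head.
rewrite (permP (perm_to_rem xs)) /= Px add1n ltnS leqn0 eqn0Ngt -has_count.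
move=> /hasPn noP; exists x => // y ys yx.
by apply: noP; rewrite mem_rem_uniq // inE yx.
Qed.

Lemma fcycle_traject (T : eqType) (f : T -> T) x k :
  iter k f x = x -> fcycle f (traject f x k).
Proof.
case: k => [//|k] iter_k; rewrite trajectS /=.
have -> : rcons (traject f (f x) k) x = traject f (f x) k.+1.
  by rewrite trajectSr -iterSr iter_k.
exact: fpath_traject.
Qed.

Lemma mul_mod_inj m k i j : coprime k m -> i < m -> j < m ->
  i * k = j * k %[mod m] -> i = j.
Proof.
wlog le_ji : i j / j <= i.
  move=> sym k_m lt_i lt_j eq_ij; have [le_ji | /ltnW le_ij] := leqP j i.
    exact: sym.
  exact/esym/sym.
move=> k_m lt_i _ /eqP.
rewrite eqn_mod_dvd ?leq_mul2r ?le_ji ?orbT // -mulnBl Gauss_dvdl 1?coprime_sym //.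
have [ij0 | ij_gt0] := posnP (i - j); first lia.
by move=> /(dvdn_leq ij_gt0); lia.
Qed.

Lemma mod3_succ_neq u v : u < 3 -> v < 3 -> u != v ->
  (u.+1 %% 3 == v) != (v.+1 %% 3 == u).
Proof. by case: u => [|[|[|u]]] //; case: v => [|[|[|v]]]. Qed.

Lemma mod3_turn u v w : u < 3 -> v < 3 -> w < 3 -> u != v -> v != w ->
  (u.+1 %% 3 == v) != (v.+1 %% 3 == w) -> u = w.
Proof.
by case: u => [|[|[|u]]] //; case: v => [|[|[|v]]] //; case: w => [|[|[|w]]].
Qed.

Section Orientations.
Variables (p q : nat) (o : rel 'I_p).

Lemma Kpq_adj_sym a b : Kpq_adj p q a b = Kpq_adj p q b a.
Proof. by rewrite /Kpq_adj /ndist addnC. Qed.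

Lemma Kpq_adj_neq a b : 0 < q -> Kpq_adj p q a b -> a != b.
Proof.
by move=> q_gt0; apply: contraTneq => ->; rewrite /Kpq_adj /ndist subnn; lia.
Qed.

Hypothesis o_orient : is_orientation p q o.

Lemma orientationN a b : Kpq_adj p q a b -> o b a = ~~ o a b.
Proof. by case: o_orient => _ /[apply]; case: (o a b); case: (o b a). Qed.

Lemma mixed_inE s x : cycle (Kpq_adj p q) s -> x \in s ->
  mixed_in p o s x = (o (prev s x) x == o x (next s x)).
Proof.
move=> cs xs; rewrite /mixed_in (orientationN (next_cycle cs xs)).
rewrite (orientationN (prev_cycle cs xs)).
by case: (o (prev s x) x); case: (o x (next s x)).
Qed.

End Orientations.

Section BlockOrientation.
Variables (p q : nat).
Hypotheses (q_gt0 : 0 < q) (p_le3q : p <= 3 * q).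

Definition block (a : 'I_p) : nat := a %/ q.

Definition block_orientation : rel 'I_p :=
  fun a b => Kpq_adj p q a b && ((block a).+1 %% 3 == block b).

Lemma block_lt3 a : block a < 3.
Proof. by rewrite /block ltn_divLR //; have := ltn_ord a; lia. Qed.

Lemma block_adj_neq a b : Kpq_adj p q a b -> block a != block b.
Proof.
rewrite /Kpq_adj /ndist /block => /andP[far _]; apply/eqP => same_block.
move: far; have := divn_eq a q; have := divn_eq b q.
have := ltn_pmod a q_gt0; have := ltn_pmod b q_gt0; rewrite same_block.
move: (a %% q) (b %% q) (b %/ q * q) => x y z; lia.
Qed.

Lemma block_orientation_is_orientation : is_orientation p q block_orientation.
Proof.
split=> [a b /andP[] // | a b ab].
rewrite /block_orientation ab Kpq_adj_sym ab /=.
by apply: mod3_succ_neq; rewrite ?block_lt3 ?block_adj_neq.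
Qed.

Lemma block_orientation_no_alternating_odd_cycle s :
  ~ alternating_odd_cycle p q block_orientation s.
Proof.
case=> -[Us size_s cs] odd_s alt.
have [x xs straight] := count_le1_exception Us (ltnW (ltnW size_s)) alt.
suff: block x = block (next s x) by apply/eqP/block_adj_neq/next_cycle.
apply: odd_cycle_eq_next Us odd_s xs _ => y ys /(straight y ys).
rewrite (mixed_inE block_orientation_is_orientation cs ys) /block_orientation.
have [adj_prev adj_next] := (prev_cycle cs ys, next_cycle cs ys).
rewrite adj_prev adj_next => turn.
by apply: mod3_turn turn; rewrite ?block_lt3 ?block_adj_neq.
Qed.

End BlockOrientation.

Section Zigzag.
Variables (n q : nat).
Hypotheses (q_gt0 : 0 < q) (lt_2q_p : 2 * q < n.+1).

Local Notation m := (2 * q).+1.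

Definition zig_step (v : 'I_n.+1) : 'I_n.+1 := inord ((v + q) %% m).

Definition zigzag : seq 'I_n.+1 := traject zig_step ord0 m.

Lemma zig_stepE (v : 'I_n.+1) : v < m ->
  (zig_step v : nat) = if v <= q then v + q else v - q.+1.
Proof.
move=> lt_v; rewrite inordK; last by apply: leq_trans (ltn_pmod _ _) lt_2q_p.
case: leqP => [le_vq | lt_qv]; first by rewrite modn_small //; lia.
by rewrite -[v + q](@subnK m) ?modnDr ?modn_small; lia.
Qed.

Lemma zig_step_gt (v : 'I_n.+1) : v < m -> (v < zig_step v) = (v <= q).
Proof. by move=> lt_v; rewrite zig_stepE //; case: (leqP v q); lia. Qed.

Lemma iter_zig_step i : (iter i zig_step ord0 : nat) = i * q %% m.
Proof.
elim: i => [|i IHi]; first by rewrite mod0n.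
rewrite iterS; move: (iter i zig_step ord0) IHi => v IHv.
rewrite inordK; last by apply: leq_trans (ltn_pmod _ _) lt_2q_p.
by rewrite IHv modnDml mulSn addnC.
Qed.

Lemma size_zigzag : size zigzag = m.
Proof. exact: size_traject. Qed.

Lemma zigzag_lt v : v \in zigzag -> v < m.
Proof. by case/trajectP=> i _ ->; rewrite iter_zig_step ltn_pmod. Qed.

Lemma zigzag_uniq : uniq zigzag.
Proof.
apply/(uniqP ord0) => i j; rewrite !inE size_zigzag => lt_i lt_j.
rewrite !nth_traject // => /(congr1 (@nat_of_ord _)); rewrite !iter_zig_step.
apply: mul_mod_inj lt_i lt_j.
by rewrite /coprime -addn1 gcdnMDl gcdn1.
Qed.

Lemma zigzag_next v : v \in zigzag -> next zigzag v = zig_step v.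
Proof.
apply: nextE; apply: fcycle_traject; apply: ord_inj.
by rewrite iter_zig_step modnMr.
Qed.

Lemma Kpq_adj_zig_step (v : 'I_n.+1) : v < m -> Kpq_adj n.+1 q v (zig_step v).
Proof. by move=> lt_v; rewrite /Kpq_adj /ndist zig_stepE //; case: (leqP v q); lia. Qed.

Lemma zigzag_Kpq_cycle : cycle (Kpq_adj n.+1 q) zigzag.
Proof.
apply: (cycle_from_next zigzag_uniq) => v vs.
by rewrite zigzag_next // Kpq_adj_zig_step ?zigzag_lt.
Qed.

Lemma zigzag_is_cycle : is_cycle n.+1 q zigzag.
Proof. by split; rewrite ?zigzag_uniq ?zigzag_Kpq_cycle ?size_zigzag //; lia. Qed.

Lemma zigzag_alternating (o : rel 'I_n.+1) (b : bool) :
  is_orientation n.+1 q o ->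
  (forall v : 'I_n.+1, v < m -> o v (zig_step v) = (b == (v < zig_step v))) ->
  alternating n.+1 o zigzag.
Proof.
move=> o_orient o_step; rewrite /alternating.
rewrite (@eq_in_count _ _ (pred1 (inord q))) ?count_uniq_mem ?leq_b1 ?zigzag_uniq //.
move=> v vs; set u := prev zigzag v.
have us : u \in zigzag by rewrite mem_prev.
have uv : zig_step u = v by rewrite -zigzag_next // next_prev // zigzag_uniq.
have [lt_u lt_v] := (zigzag_lt us, zigzag_lt vs).
rewrite (mixed_inE o_orient zigzag_Kpq_cycle vs) zigzag_next // -/u -{1}uv.
rewrite !o_step // !zig_step_gt //= -(inj_eq (@ord_inj _)) inordK; last lia.
rewrite -uv zig_stepE //.
by case: (leqP u q); case: (b); lia.
Qed.

End Zigzag.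

Section Triangles.
Variables (p q : nat) (o : rel 'I_p).
Hypotheses (q_gt0 : 0 < q) (o_orient : is_orientation p q o).
Hypothesis o_free : forall s, ~ alternating_odd_cycle p q o s.

Lemma triangle_cyclic a b c :
  Kpq_adj p q a b -> Kpq_adj p q b c -> Kpq_adj p q c a ->
  o a b = o b c /\ o b c = o c a.
Proof.
move=> ab bc ca; set s := [:: a; b; c].
have nab := Kpq_adj_neq q_gt0 ab; have nbc := Kpq_adj_neq q_gt0 bc.
have nca := Kpq_adj_neq q_gt0 ca.
have cs : cycle (Kpq_adj p q) s by rewrite /= ab bc ca.
have not_alt : ~ alternating p o s.
  move=> alt; apply: (@o_free s); split=> //; split=> //.
  by rewrite /= !inE negb_or nab nbc eq_sym nca.
move: not_alt; rewrite /alternating /= !(mixed_inE o_orient cs) ?inE ?eqxx ?orbT //=.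
rewrite (negbTE nab) (negbTE nbc) (negbTE nca) (eq_sym b a) (eq_sym c b) (eq_sym a c).
rewrite (negbTE nab) (negbTE nbc) (negbTE nca) !eqxx /=.
by case: (o a b); case: (o b c); case: (o c a) => //= /(_ isT).
Qed.

End Triangles.

Section LargeRatio.
Variables (n q : nat) (o : rel 'I_n.+1).
Hypotheses (q_gt0 : 0 < q) (lt_3q_p : 3 * q < n.+1).
Hypothesis o_orient : is_orientation n.+1 q o.
Hypothesis o_free : forall s, ~ alternating_odd_cycle n.+1 q o s.

Let arc i j := o (inord i) (inord j).

Lemma arc_triangle i j k : i <= j <= k -> k <= n ->
  q <= j - i -> q <= k - j -> k - i <= n.+1 - q ->
  arc i j = arc j k /\ arc j k = arc k i.
Proof.
move=> /andP[le_ij le_jk] le_kn *.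
by apply: (triangle_cyclic q_gt0 o_orient o_free); rewrite /Kpq_adj /ndist !inordK; lia.
Qed.

Lemma arc_shift a : a < q -> arc (a + q) (a + q + q) = arc a (a + q).
Proof.
move=> lt_aq; set c := a + q + q.
have [-> //] : arc a (a + q) = arc (a + q) c /\ arc (a + q) c = arc c a.
by apply: arc_triangle; lia.
Qed.

Lemma arc_skip a : a < q ->
  arc a (a + q.+1) = arc a (a + q) /\
  arc (a + q.+1) (a + q.+1 + q) = arc a (a + q).
Proof.
move=> lt_aq.
set c := a + q.+1 + q.
have [-> ->] : arc a (a + q.+1) = arc (a + q.+1) c /\ arc (a + q.+1) c = arc c a.
  by apply: arc_triangle; lia.
have [-> ->] : arc a (a + q) = arc (a + q) c /\ arc (a + q) c = arc c a.
  by apply: arc_triangle; lia.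
by [].
Qed.

Lemma arc_const a : a <= q -> arc a (a + q) = arc 0 q.
Proof.
elim: a => [//|a IHa] le_aq.
have [-> | lt_aq] := eqVneq a.+1 q; first by have := arc_shift q_gt0; rewrite !add0n.
rewrite -arc_shift; last by rewrite ltn_neqAle lt_aq.
by rewrite addSn -addnS (arc_skip _).2 ?IHa //; lia.
Qed.

Lemma arc_skip_const a : a < q -> arc a (a + q.+1) = arc 0 q.
Proof. by move=> lt_aq; rewrite (arc_skip lt_aq).1 arc_const // ltnW. Qed.

Lemma orientation_zig_step (v : 'I_n.+1) : v < (2 * q).+1 ->
  o v (zig_step q v) = (arc 0 q == (v < zig_step q v)).
Proof.
have lt_2q_p : 2 * q < n.+1 by lia.
move=> lt_v; rewrite (zig_step_gt q_gt0 lt_2q_p) //.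
rewrite -[v in o v]inord_val -[zig_step q v]inord_val zig_stepE //.
case: (leqP v q) => [le_vq | lt_qv].
  by rewrite eqb_id -/(arc v (v + q)) (arc_const le_vq).
rewrite eqbF_neg (orientationN o_orient); last first.
  by rewrite /Kpq_adj /ndist !inordK; lia.
by rewrite -[in inord v](subnK lt_qv) -/(arc _ _) arc_skip_const //; lia.
Qed.

End LargeRatio.

Theorem mainTheorem9 (p q : nat) (hq : 0 < q) (hpq : 2 * q <= p) :
  (exists o : rel 'I_p, is_orientation p q o /\
     forall s : seq 'I_p, ~ alternating_odd_cycle p q o s)
  <-> p <= 3 * q.
Proof.
case: p hpq => [|n] hpq; first lia.
split=> [[o [o_orient o_free]] | p_le3q]; last first.
  exists (block_orientation q); split.
    exact: block_orientation_is_orientation.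
  exact: block_orientation_no_alternating_odd_cycle.
rewrite leqNgt; apply/negP => lt_3q_p; have lt_2q_p : 2 * q < n.+1 by lia.
apply: (o_free (zigzag n q)); split.
- exact: zigzag_is_cycle.
- by rewrite size_zigzag /= oddM.
- apply: (zigzag_alternating hq lt_2q_p o_orient).
  exact: orientation_zig_step.
Qed.
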